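(* Let $\mathcal{C}$ be a category with pushouts and pullbacks, equipped with a costable factorisation system $(\mathcal{E},\mathcal{M})$ such that every morphism of $\mathcal{M}$ is a monomorphism. Let $\mathcal{A}$ be a subcategory of $\mathcal{C}$ containing $\mathcal{M}$, stable under pullback, and such that for every cospan $X\xrightarrow{f}A\xleftarrow{g}Y$ in $\mathcal{A}$, the unique induced morphism from the pushout (in $\mathcal{C}$) of the pullback span (in $\mathcal{C}$) of $f,g$ to $A$ lies in $\mathcal{M}$. Then the square \[ \begin{array}{ccc} \mathcal{A}+_{|\mathcal{A}|}\mathcal{A}^{op} & \longrightarrow & \mathrm{Span}(\mathcal{A})\\ \downarrow & & \downarrow \Pi\\ \mathrm{Cospan}(\mathcal{C}) & \xrightarrow{\ \Gamma\ } & \mathrm{Corel}(\mathcal{C}) \end{array} \] is a pushout in the category $\mathbf{CAT}$ of categories and functors.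
   Context: Composition is written diagrammatically ($f;g$ means first $f$, then $g$). A factorisation system $(\mathcal{E},\mathcal{M})$: subcategories containing all isomorphisms such that every morphism factors as $e;m$ with $e\in\mathcal{E}$, $m\in\mathcal{M}$, with the unique diagonal fill-in property (given $f=e;m$, $f'=e';m'$ and $u,v$ with $f;v=u;f'$, there is a unique $s$ with $e;s=u;e'$, $m;v=s;m'$). Costable: $\mathcal{M}$ stable under pushout (in a pushout square, if a morphism out of the apex is in $\mathcal{M}$, so is the opposite side). $\mathcal{A}$ stable under pullback: in a pullback square, if a morphism into the corner lies in $\mathcal{A}$, so does the opposite side. $\mathrm{Cospan}(\mathcal{C})$ (resp. $\mathrm{Span}(\mathcal{C})$): objects of $\mathcal{C}$, morphisms isomorphism classes of cospans (resp. spans), composed by pushout (resp. pullback); $\mathrm{Span}(\mathcal{A})$ is the subcategory of spans with both legs in $\mathcal{A}$. $\mathrm{Corel}(\mathcal{C})$: objects of $\mathcal{C}$, morphisms $X\to Y$ equivalence classes of cospans $X\xrightarrow{f}N\xleftarrow{g}Y$ under the equivalence relation generated by relating it to $X\xrightarrow{f'}N'\xleftarrow{g'}Y$ whenever some $m\colon N\to N'$ in $\mathcal{M}$ has $f;m=f'$, $g;m=g'$; composition by pushout. $\Gamma$ is the identity-on-objects functor sending a cospan to the corelation it represents. $\Pi$ is the identity-on-objects functor sending a span in $\mathcal{A}$ to the corelation represented by its pushout cospan in $\mathcal{C}$. $\mathcal{A}+_{|\mathcal{A}|}\mathcal{A}^{op}$ is the category with the objects of $\mathcal{A}$ whose morphisms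 are finite zigzags $X\xrightarrow{f}\cdot\xleftarrow{g}\cdot\xrightarrow{h}\cdots Y$ of non-identity morphisms of $\mathcal{A}$ (alternating direction), composed by concatenation, composing consecutive same-direction arrows in $\mathcal{A}$ and removing resulting identities, with the empty zigzag as identity (equivalently the pushout of $\mathcal{A}$ and $\mathcal{A}^{op}$ over the discrete category on the objects). The functor to $\mathrm{Span}(\mathcal{A})$ sends a forward arrow $f$ to the span $(\mathrm{id},f)$ and a backward arrow $g$ to $(g,\mathrm{id})$, extended by composition; the functor to $\mathrm{Cospan}(\mathcal{C})$ sends $f$ forward to the cospan $(f,\mathrm{id})$ and $g$ backward to $(\mathrm{id},g)$, extended by composition. *)

From Stdlib Require Import Relations.

Record Cat := {
  Ob :> Type;
  Hm : Ob -> Ob -> Type;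
  Heq : forall a b, Hm a b -> Hm a b -> Prop;
  Cid : forall a, Hm a a;
  Cmp : forall a b c, Hm a b -> Hm b c -> Hm a c   (* diagrammatic: f then g *)
}.
Arguments Hm {_} _ _.
Arguments Heq {_ _ _} _ _.
Arguments Cid {_} _.
Arguments Cmp {_ _ _ _} _ _.

Infix ">>" := Cmp (at level 40, left associativity).
Infix "=~" := Heq (at level 70).

Definition IsCategory (C : Cat) : Prop :=
  (forall a b : C, equiv (Hm a b) (@Heq C a b)) /\
  (forall (a b c : C) (f f' : Hm a b) (g g' : Hm b c),
      f =~ f' -> g =~ g' -> f >> g =~ f' >> g') /\
  (forall (a b : C) (f : Hm a b), Cid a >> f =~ f) /\
  (forall (a b : C) (f : Hm a b), f >> Cid b =~ f) /\
  (forall (a b c d : C) (f : Hm a b) (g : Hm b c) (h : Hm c d),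
      (f >> g) >> h =~ f >> (g >> h)).

Record Functor (X Y : Cat) := {
  Fob : Ob X -> Ob Y;
  Fhm : forall a b, Hm a b -> Hm (Fob a) (Fob b)
}.
Arguments Fob {_ _} _ _.
Arguments Fhm {_ _} _ {_ _} _.

Definition IsFunctor {X Y : Cat} (F : Functor X Y) : Prop :=
  (forall a b (f g : Hm a b), f =~ g -> Fhm F f =~ Fhm F g) /\
  (forall a, Fhm F (Cid a) =~ Cid (Fob F a)) /\
  (forall a b c (f : Hm a b) (g : Hm b c), Fhm F (f >> g) =~ Fhm F f >> Fhm F g).

Definition Fcomp {X Y Z : Cat} (F : Functor X Y) (G : Functor Y Z) : Functor X Z :=
  {| Fob := fun a => Fob G (Fob F a);
     Fhm := fun a b f => Fhm G (Fhm F f) |}.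

Definition hcast {Y : Cat} {a b a' b' : Ob Y} (ea : a = a') (eb : b = b')
  (h : Hm a b) : Hm a' b' :=
  match ea in _ = a1 return Hm a1 b' with
  | eq_refl => match eb in _ = b1 return Hm a b1 with eq_refl => h end
  end.

Definition FunEq {X Y : Cat} (F G : Functor X Y) : Prop :=
  exists e : forall x, Fob F x = Fob G x,
    forall a b (f : Hm a b), hcast (e a) (e b) (Fhm F f) =~ Fhm G f.

Definition IsPushoutCAT {A0 B0 C0 P0 : Cat}
  (f : Functor A0 B0) (g : Functor A0 C0)
  (i1 : Functor B0 P0) (i2 : Functor C0 P0) : Prop :=
  FunEq (Fcomp f i1) (Fcomp g i2) /\
  forall (D : Cat), IsCategory D ->
  forall (h : Functor B0 D) (k : Functor C0 D),
    IsFunctor h -> IsFunctor k -> FunEq (Fcomp f h) (Fcomp g k) ->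
    exists u : Functor P0 D,
      IsFunctor u /\ FunEq (Fcomp i1 u) h /\ FunEq (Fcomp i2 u) k /\
      forall u' : Functor P0 D,
        IsFunctor u' -> FunEq (Fcomp i1 u') h -> FunEq (Fcomp i2 u') k ->
        FunEq u' u.

Definition MorPred (C : Cat) := forall a b : Ob C, Hm a b -> Prop.

Definition IsIso {C : Cat} {a b : Ob C} (f : Hm a b) : Prop :=
  exists g : Hm b a, f >> g =~ Cid a /\ g >> f =~ Cid b.

Definition IsMono {C : Cat} {a b : Ob C} (m : Hm a b) : Prop :=
  forall w (u v : Hm w a), u >> m =~ v >> m -> u =~ v.

(* subcategory (wide, given by a class of morphisms) *)
Definition IsSubcat {C : Cat} (P : MorPred C) : Prop :=
  (forall a b (f g : Hm a b), f =~ g -> P a b f -> P a b g) /\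
  (forall a, P a a (Cid a)) /\
  (forall a b c (f : Hm a b) (g : Hm b c), P a b f -> P b c g -> P a c (f >> g)).

Definition ContainsIsos {C : Cat} (P : MorPred C) : Prop :=
  forall a b (f : Hm a b), IsIso f -> P a b f.

Definition IsPullback {C : Cat} {a b c p : Ob C}
  (f : Hm a c) (g : Hm b c) (p1 : Hm p a) (p2 : Hm p b) : Prop :=
  p1 >> f =~ p2 >> g /\
  forall w (u : Hm w a) (v : Hm w b), u >> f =~ v >> g ->
    exists t : Hm w p, (t >> p1 =~ u /\ t >> p2 =~ v) /\
      forall t' : Hm w p, t' >> p1 =~ u -> t' >> p2 =~ v -> t' =~ t.

Definition IsPushout {C : Cat} {a b c q : Ob C}
  (f : Hm a b) (g : Hm a c) (q1 : Hm b q) (q2 : Hm c q) : Prop :=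
  f >> q1 =~ g >> q2 /\
  forall w (u : Hm b w) (v : Hm c w), f >> u =~ g >> v ->
    exists t : Hm q w, (q1 >> t =~ u /\ q2 >> t =~ v) /\
      forall t' : Hm q w, q1 >> t' =~ u -> q2 >> t' =~ v -> t' =~ t.

Record HasPullbacks (C : Cat) := {
  pb_ob : forall a b c (f : Hm a c) (g : Hm b c), Ob C;
  pb_p1 : forall a b c (f : Hm a c) (g : Hm b c), Hm (pb_ob a b c f g) a;
  pb_p2 : forall a b c (f : Hm a c) (g : Hm b c), Hm (pb_ob a b c f g) b;
  pb_spec : forall a b c (f : Hm a c) (g : Hm b c),
      IsPullback f g (pb_p1 a b c f g) (pb_p2 a b c f g)
}.
Arguments pb_ob {_} _ {_ _ _} _ _.
Arguments pb_p1 {_} _ {_ _ _} _ _.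
Arguments pb_p2 {_} _ {_ _ _} _ _.

Record HasPushouts (C : Cat) := {
  po_ob : forall a b c (f : Hm a b) (g : Hm a c), Ob C;
  po_q1 : forall a b c (f : Hm a b) (g : Hm a c), Hm b (po_ob a b c f g);
  po_q2 : forall a b c (f : Hm a b) (g : Hm a c), Hm c (po_ob a b c f g);
  po_spec : forall a b c (f : Hm a b) (g : Hm a c),
      IsPushout f g (po_q1 a b c f g) (po_q2 a b c f g)
}.
Arguments po_ob {_} _ {_ _ _} _ _.
Arguments po_q1 {_} _ {_ _ _} _ _.
Arguments po_q2 {_} _ {_ _ _} _ _.

Definition FactSystem {C : Cat} (E M : MorPred C) : Prop :=
  IsSubcat E /\ IsSubcat M /\ ContainsIsos E /\ ContainsIsos M /\
  (forall a b (f : Hm a b), exists z (e : Hm a z) (m : Hm z b),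
      E _ _ e /\ M _ _ m /\ e >> m =~ f) /\
  (forall x z y x' z' y' (e : Hm x z) (m : Hm z y) (e' : Hm x' z') (m' : Hm z' y')
          (u : Hm x x') (v : Hm y y'),
      E _ _ e -> M _ _ m -> E _ _ e' -> M _ _ m' ->
      (e >> m) >> v =~ u >> (e' >> m') ->
      exists s : Hm z z', (e >> s =~ u >> e' /\ m >> v =~ s >> m') /\
        forall s' : Hm z z', e >> s' =~ u >> e' -> m >> v =~ s' >> m' -> s' =~ s).

Definition Costable {C : Cat} (M : MorPred C) : Prop :=
  forall a b c q (f : Hm a b) (g : Hm a c) (q1 : Hm b q) (q2 : Hm c q),
    IsPushout f g q1 q2 -> (M _ _ f -> M _ _ q2) /\ (M _ _ g -> M _ _ q1).

Definition AllMono {C : Cat} (M : MorPred C) : Prop :=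
  forall a b (m : Hm a b), M a b m -> IsMono m.

Definition PullbackStable {C : Cat} (A : MorPred C) : Prop :=
  forall a b c p (f : Hm a c) (g : Hm b c) (p1 : Hm p a) (p2 : Hm p b),
    IsPullback f g p1 p2 -> (A _ _ g -> A _ _ p1) /\ (A _ _ f -> A _ _ p2).

Definition PbPoCondition {C : Cat} (M A : MorPred C) : Prop :=
  forall x y a (f : Hm x a) (g : Hm y a), A _ _ f -> A _ _ g ->
  forall p (p1 : Hm p x) (p2 : Hm p y), IsPullback f g p1 p2 ->
  forall q (q1 : Hm x q) (q2 : Hm y q), IsPushout p1 p2 q1 q2 ->
  forall u : Hm q a, q1 >> u =~ f -> q2 >> u =~ g -> M _ _ u.

Record cospan (C : Cat) (x y : Ob C) := {
  csp_apex : Ob C; csp_l : Hm x csp_apex; csp_r : Hm y csp_apex }.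
Arguments csp_apex {_ _ _} _.
Arguments csp_l {_ _ _} _.
Arguments csp_r {_ _ _} _.

Record span (C : Cat) (x y : Ob C) := {
  sp_apex : Ob C; sp_l : Hm sp_apex x; sp_r : Hm sp_apex y }.
Arguments sp_apex {_ _ _} _.
Arguments sp_l {_ _ _} _.
Arguments sp_r {_ _ _} _.

Definition cospan_iso {C : Cat} {x y : Ob C} (s t : cospan C x y) : Prop :=
  exists i : Hm (csp_apex s) (csp_apex t),
    IsIso i /\ csp_l s >> i =~ csp_l t /\ csp_r s >> i =~ csp_r t.

Definition span_iso {C : Cat} {x y : Ob C} (s t : span C x y) : Prop :=
  exists i : Hm (sp_apex s) (sp_apex t),
    IsIso i /\ i >> sp_l t =~ sp_l s /\ i >> sp_r t =~ sp_r s.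

Definition cospan_id {C : Cat} (x : Ob C) : cospan C x x :=
  {| csp_apex := x; csp_l := Cid x; csp_r := Cid x |}.

Definition cospan_comp {C : Cat} (po : HasPushouts C) {x y z : Ob C}
  (s : cospan C x y) (t : cospan C y z) : cospan C x z :=
  {| csp_apex := po_ob po (csp_r s) (csp_l t);
     csp_l := csp_l s >> po_q1 po (csp_r s) (csp_l t);
     csp_r := csp_r t >> po_q2 po (csp_r s) (csp_l t) |}.

Definition span_id {C : Cat} (x : Ob C) : span C x x :=
  {| sp_apex := x; sp_l := Cid x; sp_r := Cid x |}.

Definition span_comp {C : Cat} (pb : HasPullbacks C) {x y z : Ob C}
  (s : span C x y) (t : span C y z) : span C x z :=
  {| sp_apex := pb_ob pb (sp_r s) (sp_l t);
     sp_l := pb_p1 pb (sp_r s) (sp_l t) >> sp_l s;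
     sp_r := pb_p2 pb (sp_r s) (sp_l t) >> sp_r t |}.

Definition CospanCat {C : Cat} (po : HasPushouts C) : Cat :=
  {| Ob := Ob C;
     Hm := cospan C;
     Heq := fun x y s t => cospan_iso s t;
     Cid := cospan_id;
     Cmp := fun x y z s t => cospan_comp po s t |}.

Definition corel_step {C : Cat} (M : MorPred C) {x y : Ob C}
  (s t : cospan C x y) : Prop :=
  exists m : Hm (csp_apex s) (csp_apex t),
    M _ _ m /\ csp_l s >> m =~ csp_l t /\ csp_r s >> m =~ csp_r t.

Definition CorelCat {C : Cat} (po : HasPushouts C) (M : MorPred C) : Cat :=
  {| Ob := Ob C;
     Hm := cospan C;
     Heq := fun x y => clos_refl_sym_trans (cospan C x y) (corel_step M);
     Cid := cospan_id;
     Cmp := fun x y z s t => cospan_comp po s t |}.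

Definition spanA {C : Cat} (A : MorPred C) (x y : Ob C) :=
  { s : span C x y | A _ _ (sp_l s) /\ A _ _ (sp_r s) }.

Lemma span_id_A {C : Cat} (A : MorPred C) (hA : IsSubcat A) (x : Ob C) :
  A _ _ (sp_l (span_id x)) /\ A _ _ (sp_r (span_id x)).
Proof. destruct hA as [_ [hid _]]. simpl. split; apply hid. Qed.

Lemma span_comp_A {C : Cat} (pb : HasPullbacks C) (A : MorPred C)
  (hA : IsSubcat A) (hst : PullbackStable A) {x y z : Ob C}
  (s : spanA A x y) (t : spanA A y z) :
  A _ _ (sp_l (span_comp pb (proj1_sig s) (proj1_sig t))) /\
  A _ _ (sp_r (span_comp pb (proj1_sig s) (proj1_sig t))).
Proof.
  destruct s as [s [hs1 hs2]], t as [t [ht1 ht2]]; simpl.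
  destruct hA as [_ [_ hc]].
  destruct (hst _ _ _ _ _ _ _ _ (pb_spec C pb _ _ _ (sp_r s) (sp_l t))) as [H1 H2].
  split; apply hc; auto.
Qed.

Definition SpanACat {C : Cat} (pb : HasPullbacks C) (A : MorPred C)
  (hA : IsSubcat A) (hst : PullbackStable A) : Cat :=
  {| Ob := Ob C;
     Hm := spanA A;
     Heq := fun x y s t => span_iso (proj1_sig s) (proj1_sig t);
     Cid := fun x => exist _ (span_id x) (span_id_A A hA x);
     Cmp := fun x y z s t =>
       exist _ (span_comp pb (proj1_sig s) (proj1_sig t))
               (span_comp_A pb A hA hst s t) |}.

(* words of forward / backward A-arrows, modulo the congruence generated by
   composing consecutive same-direction arrows in A and deleting identities
   (this is the pushout of A and A^op over the discrete category |A|). *)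
Inductive zz {C : Cat} (A : MorPred C) : Ob C -> Ob C -> Type :=
| zz_nil : forall x, zz A x x
| zz_fwd : forall x y z (f : Hm x y), A x y f -> zz A y z -> zz A x z
| zz_bwd : forall x y z (g : Hm y x), A y x g -> zz A y z -> zz A x z.
Arguments zz_nil {_ _} _.
Arguments zz_fwd {_ _ _ _ _} _ _ _.
Arguments zz_bwd {_ _ _ _ _} _ _ _.

Fixpoint zz_app {C : Cat} {A : MorPred C} {x y z : Ob C}
  (w : zz A x y) : zz A y z -> zz A x z :=
  match w in zz _ x0 y0 return zz A y0 z -> zz A x0 z with
  | zz_nil _ => fun v => v
  | zz_fwd f hf w' => fun v => zz_fwd f hf (zz_app w' v)
  | zz_bwd g hg w' => fun v => zz_bwd g hg (zz_app w' v)
  end.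

Inductive zz_red {C : Cat} (A : MorPred C) : forall x y, zz A x y -> zz A x y -> Prop :=
| zr_ff : forall x y z t (f : Hm x y) (g : Hm y z) hf hg (hfg : A _ _ (f >> g))
            (w : zz A z t),
    zz_red A x t (zz_fwd f hf (zz_fwd g hg w)) (zz_fwd (f >> g) hfg w)
| zr_bb : forall x y z t (g : Hm y x) (h : Hm z y) hg hh (hhg : A _ _ (h >> g))
            (w : zz A z t),
    zz_red A x t (zz_bwd g hg (zz_bwd h hh w)) (zz_bwd (h >> g) hhg w)
| zr_fid : forall x t h (w : zz A x t), zz_red A x t (zz_fwd (Cid x) h w) w
| zr_bid : forall x t h (w : zz A x t), zz_red A x t (zz_bwd (Cid x) h w) w
| zr_fcong : forall x y t (f f' : Hm x y) hf hf' (w : zz A y t),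
    f =~ f' -> zz_red A x t (zz_fwd f hf w) (zz_fwd f' hf' w)
| zr_bcong : forall x y t (g g' : Hm y x) hg hg' (w : zz A y t),
    g =~ g' -> zz_red A x t (zz_bwd g hg w) (zz_bwd g' hg' w)
| zr_fctx : forall x y t (f : Hm x y) hf (w w' : zz A y t),
    zz_red A y t w w' -> zz_red A x t (zz_fwd f hf w) (zz_fwd f hf w')
| zr_bctx : forall x y t (g : Hm y x) hg (w w' : zz A y t),
    zz_red A y t w w' -> zz_red A x t (zz_bwd g hg w) (zz_bwd g hg w').

Definition ZZCat {C : Cat} (A : MorPred C) : Cat :=
  {| Ob := Ob C;
     Hm := zz A;
     Heq := fun x y => clos_refl_sym_trans (zz A x y) (zz_red A x y);
     Cid := fun x => zz_nil x;
     Cmp := fun x y z w v => zz_app w v |}.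

Fixpoint zz_to_span {C : Cat} (pb : HasPullbacks C) (A : MorPred C)
  (hA : IsSubcat A) (hst : PullbackStable A) {x y : Ob C} (w : zz A x y)
  : Hm (c0 := SpanACat pb A hA hst) x y :=
  match w in zz _ x0 y0 return Hm (c0 := SpanACat pb A hA hst) x0 y0 with
  | zz_nil x0 => Cid (c0 := SpanACat pb A hA hst) x0
  | @zz_fwd _ _ x0 y0 _ f hf w' =>
      Cmp (c0 := SpanACat pb A hA hst)
        (exist _ {| sp_apex := x0; sp_l := Cid x0; sp_r := f |}
           (conj (proj1 (proj2 hA) x0) hf))
        (zz_to_span pb A hA hst w')
  | @zz_bwd _ _ x0 y0 _ g hg w' =>
      Cmp (c0 := SpanACat pb A hA hst)
        (exist _ {| sp_apex := y0; sp_l := g; sp_r := Cid y0 |}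
           (conj hg (proj1 (proj2 hA) y0)))
        (zz_to_span pb A hA hst w')
  end.

Fixpoint zz_to_cospan {C : Cat} (po : HasPushouts C) (A : MorPred C)
  {x y : Ob C} (w : zz A x y) : cospan C x y :=
  match w in zz _ x0 y0 return cospan C x0 y0 with
  | zz_nil x0 => cospan_id x0
  | @zz_fwd _ _ x0 y0 _ f hf w' =>
      cospan_comp po {| csp_apex := y0; csp_l := f; csp_r := Cid y0 |}
                     (zz_to_cospan po A w')
  | @zz_bwd _ _ x0 y0 _ g hg w' =>
      cospan_comp po {| csp_apex := x0; csp_l := Cid x0; csp_r := g |}
                     (zz_to_cospan po A w')
  end.

Definition ZZtoSpan {C : Cat} (pb : HasPullbacks C) (A : MorPred C)
  (hA : IsSubcat A) (hst : PullbackStable A)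
  : Functor (ZZCat A) (SpanACat pb A hA hst) :=
  @Build_Functor (ZZCat A) (SpanACat pb A hA hst) (fun x => x)
    (fun (x y : C) (w : zz A x y) => zz_to_span pb A hA hst w).

Definition ZZtoCospan {C : Cat} (po : HasPushouts C) (A : MorPred C)
  : Functor (ZZCat A) (CospanCat po) :=
  @Build_Functor (ZZCat A) (CospanCat po) (fun x => x)
    (fun (x y : C) (w : zz A x y) => zz_to_cospan po A w).

Definition PiF {C : Cat} (pb : HasPullbacks C) (po : HasPushouts C)
  (M A : MorPred C) (hA : IsSubcat A) (hst : PullbackStable A)
  : Functor (SpanACat pb A hA hst) (CorelCat po M) :=
  @Build_Functor (SpanACat pb A hA hst) (CorelCat po M) (fun x => x)
     (fun (x y : C) (s : spanA A x y) =>
       let s0 := proj1_sig s in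
       {| csp_apex := po_ob po (sp_l s0) (sp_r s0);
          csp_l := po_q1 po (sp_l s0) (sp_r s0);
          csp_r := po_q2 po (sp_l s0) (sp_r s0) |} : cospan C x y).

Definition GammaF {C : Cat} (po : HasPushouts C) (M : MorPred C)
  : Functor (CospanCat po) (CorelCat po M) :=
  @Build_Functor (CospanCat po) (CorelCat po M) (fun x => x)
    (fun (x y : C) (s : cospan C x y) => s).

(* Gamma is the identity on objects and surjective on morphisms, so a cocone (h, k) under
   the square forces the mediating functor to be k itself; the point is that k descends to
   corelations.  A cospan (f;m, g;m) with m in M is (f,id);(m,m);(id,g), so it suffices that
   k sends (m,m) to an identity.  Now (m,m) is the image of the zigzag m, m^op, whose image in
   Span(A) is the kernel pair of the monomorphism m, an identity; the cocone condition then
   transfers this to k.  Compatibility with h holds since every span (l, r) is the image of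
   the zigzag l^op, r.  The square itself commutes because Pi is a functor: for composable
   spans, the pushout of the composite span maps to the composite of the pushouts by a
   pushout of the comparison map G -> y, where G is the pushout of the pullback of the
   middle legs; that comparison map is in M by hypothesis, hence so is its pushout, M being
   costable. *)

From Stdlib Require Import Relations Setoid Morphisms.

Existing Class IsCategory.

#[global] Instance rst_Equivalence {X : Type} (R : relation X) :
  Equivalence (clos_refl_sym_trans X R).
Proof. split; [exact (rst_refl X R) | exact (rst_sym X R) | exact (rst_trans X R)]. Qed.

Lemma Equivalence_equiv {X : Type} (R : relation X) `{Equivalence X R} : equiv X R.
Proof. split; [|split]; intro; [reflexivity | etransitivity | symmetry]; eauto. Qed.

Lemma rst_ind_map {X Y : Type} (R : relation X) (S : relation Y) `{Equivalence Y S}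
  (f : X -> Y) :
  (forall x y, R x y -> S (f x) (f y)) ->
  forall x y, clos_refl_sym_trans X R x y -> S (f x) (f y).
Proof.
  intros Hf x y Hxy; induction Hxy as [| |? ? _ IH|? ? ? _ IH1 _ IH2]; auto.
  - reflexivity.
  - symmetry; exact IH.
  - etransitivity; eauto.
Qed.

Section CategoryLaws.
Context {C : Cat} {hC : IsCategory C}.

#[global] Instance Heq_Equivalence (a b : C) : Equivalence (@Heq C a b).
Proof. destruct hC as [H _]; destruct (H a b) as [? [? ?]]; split; auto. Qed.

#[global] Instance Cmp_Proper (a b c : C) : Proper (Heq ==> Heq ==> Heq) (@Cmp C a b c).
Proof. destruct hC as [_ [H _]]; intros f f' Hf g g' Hg; apply H; auto. Qed.

Lemma cmp_id_l {a b : C} (f : Hm a b) : Cid a >> f =~ f.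
Proof. apply hC. Qed.

Lemma cmp_id_r {a b : C} (f : Hm a b) : f >> Cid b =~ f.
Proof. apply hC. Qed.

Lemma cmp_assoc {a b c d : C} (f : Hm a b) (g : Hm b c) (h : Hm c d) :
  (f >> g) >> h =~ f >> (g >> h).
Proof. apply hC. Qed.

Lemma iso_id (a : C) : IsIso (Cid a).
Proof. exists (Cid a); split; apply cmp_id_l. Qed.

Lemma iso_comp {a b c : C} (i : Hm a b) (j : Hm b c) :
  IsIso i -> IsIso j -> IsIso (i >> j).
Proof.
  intros [i' [I1 I2]] [j' [J1 J2]]; exists (j' >> i'); split.
  - rewrite cmp_assoc, <- (cmp_assoc j j' i'), J1, cmp_id_l; exact I1.
  - rewrite cmp_assoc, <- (cmp_assoc i' i j), I2, cmp_id_l; exact J2.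
Qed.

Lemma iso_inverse {a b : C} (i : Hm a b) :
  IsIso i -> exists j, IsIso j /\ i >> j =~ Cid a /\ j >> i =~ Cid b.
Proof. intros [j [H1 H2]]; exists j; split; [exists i|]; auto. Qed.

End CategoryLaws.

(** * Pushouts *)

Section Pushouts.
Context {C : Cat} {hC : IsCategory C}.

Lemma pushout_jointly_epi {a b c q : C} (f : Hm a b) (g : Hm a c) q1 q2 :
  @IsPushout C a b c q f g q1 q2 ->
  forall w (x y : Hm q w), q1 >> x =~ q1 >> y -> q2 >> x =~ q2 >> y -> x =~ y.
Proof.
  intros [Hc Hu] w x y H1 H2.
  destruct (Hu w (q1 >> x) (q2 >> x)) as [t [_ Tu]].
  - rewrite <- !cmp_assoc, Hc; reflexivity.
  - rewrite (Tu x) by reflexivity; symmetry; apply Tu; symmetry; auto.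
Qed.

Lemma pushout_proper {a b c q : C} (f f' : Hm a b) (g g' : Hm a c) q1 q1' q2 q2' :
  f =~ f' -> g =~ g' -> q1 =~ q1' -> q2 =~ q2' ->
  @IsPushout C a b c q f g q1 q2 -> IsPushout f' g' q1' q2'.
Proof.
  intros Ef Eg E1 E2 [Hc Hu]; split.
  - rewrite <- Ef, <- Eg, <- E1, <- E2; exact Hc.
  - intros w u v H; destruct (Hu w u v) as [t [[T1 T2] Tu]].
    + rewrite Ef, Eg; exact H.
    + exists t; split; [rewrite <- E1, <- E2; auto|].
      intros t' H1 H2; apply Tu; [rewrite E1 | rewrite E2]; auto.
Qed.

Lemma pushout_sym {a b c q : C} (f : Hm a b) (g : Hm a c) q1 q2 :
  @IsPushout C a b c q f g q1 q2 -> IsPushout g f q2 q1.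
Proof.
  intros [Hc Hu]; split; [symmetry; exact Hc|].
  intros w u v H; destruct (Hu w v u) as [t [[T1 T2] Tu]]; [symmetry; exact H|].
  exists t; split; [auto|]; intros t' H1 H2; apply Tu; auto.
Qed.

Lemma pushout_unique {a b c q r : C} (f : Hm a b) (g : Hm a c) q1 q2 (r1 : Hm b r) r2 :
  @IsPushout C a b c q f g q1 q2 -> IsPushout f g r1 r2 ->
  exists i : Hm q r, IsIso i /\ q1 >> i =~ r1 /\ q2 >> i =~ r2.
Proof.
  intros Pq Pr; pose proof Pq as [Hq Uq]; pose proof Pr as [Hr Ur].
  destruct (Uq r r1 r2 Hr) as [i [[I1 I2] _]].
  destruct (Ur q q1 q2 Hq) as [j [[J1 J2] _]].
  exists i; split; [exists j; split|auto].
  - apply (pushout_jointly_epi _ _ _ _ Pq); rewrite <- cmp_assoc, cmp_id_r.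
    + rewrite I1; exact J1.
    + rewrite I2; exact J2.
  - apply (pushout_jointly_epi _ _ _ _ Pr); rewrite <- cmp_assoc, cmp_id_r.
    + rewrite J1; exact I1.
    + rewrite J2; exact I2.
Qed.

Lemma pushout_id_l {a c : C} (g : Hm a c) : IsPushout (Cid a) g g (Cid c).
Proof.
  split; [rewrite cmp_id_l, cmp_id_r; reflexivity|].
  intros w u v H; rewrite cmp_id_l in H; exists v; split; [split|].
  - symmetry; exact H.
  - apply cmp_id_l.
  - intros t' _ H2; rewrite cmp_id_l in H2; exact H2.
Qed.

Lemma pushout_of_iso {a b c q : C} (f : Hm a b) (g : Hm a c) q1 q2 :
  @IsPushout C a b c q f g q1 q2 -> IsIso g -> IsIso q1.
Proof.
  intros P [g' [G1 G2]]; pose proof P as [Hc Hu].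
  destruct (Hu b (Cid b) (g' >> f)) as [t [[T1 T2] _]].
  { rewrite <- cmp_assoc, G1, cmp_id_l, cmp_id_r; reflexivity. }
  exists t; split; [exact T1|].
  apply (pushout_jointly_epi _ _ _ _ P).
  - rewrite <- cmp_assoc, T1, cmp_id_l, cmp_id_r; reflexivity.
  - rewrite <- cmp_assoc, T2, cmp_assoc, Hc, <- cmp_assoc, G2, cmp_id_l, cmp_id_r.
    reflexivity.
Qed.

Lemma pushout_paste {a b c d q r : C} (f : Hm a b) (g : Hm a c) (q1 : Hm b q) (q2 : Hm c q)
  (h : Hm b d) (r1 : Hm q r) (r2 : Hm d r) :
  IsPushout f g q1 q2 -> IsPushout q1 h r1 r2 -> IsPushout (f >> h) g r2 (q2 >> r1).
Proof.
  intros [Hq Uq] [Hr Ur]; split.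
  - rewrite cmp_assoc, <- Hr, <- !cmp_assoc, Hq; reflexivity.
  - intros w u v H.
    destruct (Uq w (h >> u) v) as [t1 [[T1 T2] Tu1]]; [rewrite <- cmp_assoc; exact H|].
    destruct (Ur w t1 u) as [t2 [[S1 S2] Su]]; [exact T1|].
    exists t2; split; [split; [exact S2 | rewrite cmp_assoc, S1; exact T2]|].
    intros t' H1 H2; apply Su; [apply Tu1|exact H1].
    + rewrite <- cmp_assoc, Hr, cmp_assoc, H1; reflexivity.
    + rewrite <- cmp_assoc; exact H2.
Qed.

Lemma pushout_cancel {a b c d q r : C} (f : Hm a b) (g : Hm a c) (q1 : Hm b q) (q2 : Hm c q)
  (h : Hm b d) (r1 : Hm d r) (r2 : Hm c r) (n : Hm q r) :
  IsPushout f g q1 q2 -> IsPushout (f >> h) g r1 r2 ->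
  q1 >> n =~ h >> r1 -> q2 >> n =~ r2 -> IsPushout q1 h n r1.
Proof.
  intros Pq [Hr Ur] N1 N2; pose proof Pq as [Hq _]; split; [exact N1|].
  intros w x y H.
  destruct (Ur w y (q2 >> x)) as [t [[T1 T2] Tu]].
  { rewrite cmp_assoc, <- H, <- !cmp_assoc, Hq; reflexivity. }
  exists t; split; [split; [|exact T1]|].
  - apply (pushout_jointly_epi _ _ _ _ Pq).
    + rewrite <- cmp_assoc, N1, cmp_assoc, T1, H; reflexivity.
    + rewrite <- cmp_assoc, N2, T2; reflexivity.
  - intros t' H1 H2; apply Tu; [exact H2|].
    rewrite <- N2, cmp_assoc, H1; reflexivity.
Qed.

Lemma pushout_map {a b c q r : C} (f : Hm a b) (g : Hm a c) (q1 : Hm b q) (q2 : Hm c q)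
  (u : Hm b r) (v : Hm c r) :
  IsPushout f g q1 q2 -> f >> u =~ g >> v -> exists t, q1 >> t =~ u /\ q2 >> t =~ v.
Proof. intros [_ Uq] H; destruct (Uq r u v H) as [t [T _]]; exists t; exact T. Qed.

Lemma pushout_precomp_iso {a a' b c q : C} (i : Hm a' a) (f : Hm a b) (g : Hm a c) q1 q2 :
  IsIso i -> @IsPushout C a b c q f g q1 q2 -> IsPushout (i >> f) (i >> g) q1 q2.
Proof.
  intros [j [_ J2]] [Hc Hu]; split; [rewrite !cmp_assoc, Hc; reflexivity|].
  intros w u v H; apply Hu.
  rewrite <- (cmp_id_l f), <- (cmp_id_l g), <- J2, !cmp_assoc, <- (cmp_assoc i f u),
    <- (cmp_assoc i g v), H.
  reflexivity.
Qed.

End Pushouts.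

(** * Cospans and corelations *)

Definition fwd_cospan {C : Cat} {x y : C} (f : Hm x y) : cospan C x y :=
  {| csp_apex := y; csp_l := f; csp_r := Cid y |}.

Definition bwd_cospan {C : Cat} {x y : C} (g : Hm y x) : cospan C x y :=
  {| csp_apex := x; csp_l := Cid x; csp_r := g |}.

Section Cospans.
Context {C : Cat} {hC : IsCategory C} (po : HasPushouts C).

#[global] Instance cospan_iso_Equivalence (x y : C) : Equivalence (@cospan_iso C x y).
Proof.
  split.
  - intro s; exists (Cid _); split; [apply iso_id | split; apply cmp_id_r].
  - intros s t [i [Hi [H1 H2]]]; destruct (iso_inverse i Hi) as [j [Hj [J1 _]]].
    exists j; split; [exact Hj|].
    split; [rewrite <- H1 | rewrite <- H2]; rewrite cmp_assoc, J1; apply cmp_id_r.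
  - intros s t u [i [Hi [H1 H2]]] [j [Hj [J1 J2]]]; exists (i >> j).
    split; [apply iso_comp; auto|].
    split; rewrite <- cmp_assoc; [rewrite H1 | rewrite H2]; auto.
Qed.

Lemma cospan_iso_legs {x y N : C} (f f' : Hm x N) (g g' : Hm y N) : f =~ f' -> g =~ g' ->
  cospan_iso {| csp_apex := N; csp_l := f; csp_r := g |}
             {| csp_apex := N; csp_l := f'; csp_r := g' |}.
Proof. intros; exists (Cid N); split; [apply iso_id|]; simpl; rewrite !cmp_id_r; auto. Qed.

Lemma cospan_comp_map_l {x y z : C} (s s' : cospan C x y) (t : cospan C y z)
  (m : Hm (csp_apex s) (csp_apex s')) :
  csp_l s >> m =~ csp_l s' -> csp_r s >> m =~ csp_r s' ->
  exists n, IsPushout (po_q1 po (csp_r s) (csp_l t)) m n (po_q1 po (csp_r s') (csp_l t)) /\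
    csp_l (cospan_comp po s t) >> n =~ csp_l (cospan_comp po s' t) /\
    csp_r (cospan_comp po s t) >> n =~ csp_r (cospan_comp po s' t).
Proof.
  intros Hl Hr; simpl.
  pose proof (po_spec C po _ _ _ (csp_r s) (csp_l t)) as Pq.
  assert (Pr : IsPushout (csp_r s >> m) (csp_l t) (po_q1 po (csp_r s') (csp_l t))
                 (po_q2 po (csp_r s') (csp_l t))).
  { eapply pushout_proper; [symmetry; exact Hr|reflexivity..|apply po_spec]. }
  destruct (pushout_map _ _ _ _ (m >> po_q1 po (csp_r s') (csp_l t))
              (po_q2 po (csp_r s') (csp_l t)) Pq) as [n [N1 N2]];
    [rewrite <- cmp_assoc; apply Pr|].
  exists n; split; [eapply pushout_cancel; eauto|split].
  - rewrite cmp_assoc, N1, <- cmp_assoc, Hl; reflexivity.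
  - rewrite cmp_assoc, N2; reflexivity.
Qed.

Lemma cospan_comp_map_r {x y z : C} (s : cospan C x y) (t t' : cospan C y z)
  (m : Hm (csp_apex t) (csp_apex t')) :
  csp_l t >> m =~ csp_l t' -> csp_r t >> m =~ csp_r t' ->
  exists n, IsPushout (po_q2 po (csp_r s) (csp_l t)) m n (po_q2 po (csp_r s) (csp_l t')) /\
    csp_l (cospan_comp po s t) >> n =~ csp_l (cospan_comp po s t') /\
    csp_r (cospan_comp po s t) >> n =~ csp_r (cospan_comp po s t').
Proof.
  intros Hl Hr; simpl.
  pose proof (pushout_sym _ _ _ _ (po_spec C po _ _ _ (csp_r s) (csp_l t))) as Pq.
  assert (Pr : IsPushout (csp_l t >> m) (csp_r s) (po_q2 po (csp_r s) (csp_l t'))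
                 (po_q1 po (csp_r s) (csp_l t'))).
  { eapply pushout_proper; [symmetry; exact Hl|reflexivity..|].
    apply pushout_sym, po_spec. }
  destruct (pushout_map _ _ _ _ (m >> po_q2 po (csp_r s) (csp_l t'))
              (po_q1 po (csp_r s) (csp_l t')) Pq) as [n [N1 N2]];
    [rewrite <- cmp_assoc; apply Pr|].
  exists n; split; [eapply pushout_cancel; eauto|split].
  - rewrite cmp_assoc, N2; reflexivity.
  - rewrite cmp_assoc, N1, <- cmp_assoc, Hr; reflexivity.
Qed.

#[global] Instance cospan_comp_Proper (x y z : C) :
  Proper (cospan_iso ==> cospan_iso ==> cospan_iso) (@cospan_comp C po x y z).
Proof.
  intros s s' [i [Hi [I1 I2]]] t t' [j [Hj [J1 J2]]].
  transitivity (cospan_comp po s' t).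
  - destruct (cospan_comp_map_l s s' t i I1 I2) as [n [Pn N]].
    exists n; split; [eapply pushout_of_iso; eauto | exact N].
  - destruct (cospan_comp_map_r s' t t' j J1 J2) as [n [Pn N]].
    exists n; split; [eapply pushout_of_iso; eauto | exact N].
Qed.

Lemma cospan_comp_fwd {x y z : C} (f : Hm x y) (t : cospan C y z) :
  cospan_iso (cospan_comp po (fwd_cospan f) t)
             {| csp_apex := csp_apex t; csp_l := f >> csp_l t; csp_r := csp_r t |}.
Proof.
  destruct (pushout_unique _ _ _ _ _ _ (po_spec C po _ _ _ (Cid y) (csp_l t))
              (pushout_id_l (csp_l t))) as [i [Hi [I1 I2]]].
  exists i; split; [exact Hi|]; simpl; split.
  - rewrite cmp_assoc, I1; reflexivity.
  - rewrite cmp_assoc, I2, cmp_id_r; reflexivity.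
Qed.

Lemma cospan_comp_bwd {x y z : C} (s : cospan C x y) (g : Hm z y) :
  cospan_iso (cospan_comp po s (bwd_cospan g))
             {| csp_apex := csp_apex s; csp_l := csp_l s; csp_r := g >> csp_r s |}.
Proof.
  destruct (pushout_unique _ _ _ _ _ _ (po_spec C po _ _ _ (csp_r s) (Cid y))
              (pushout_sym _ _ _ _ (pushout_id_l (csp_r s)))) as [i [Hi [I1 I2]]].
  exists i; split; [exact Hi|]; simpl; split.
  - rewrite cmp_assoc, I1, cmp_id_r; reflexivity.
  - rewrite cmp_assoc, I2; reflexivity.
Qed.

Lemma cospan_comp_id_l {x y : C} (s : cospan C x y) :
  cospan_iso (cospan_comp po (cospan_id x) s) s.
Proof.
  rewrite (cospan_comp_fwd (Cid x) s); destruct s; apply cospan_iso_legs;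
    [apply cmp_id_l | reflexivity].
Qed.

Lemma cospan_comp_id_r {x y : C} (s : cospan C x y) :
  cospan_iso (cospan_comp po s (cospan_id y)) s.
Proof.
  rewrite (cospan_comp_bwd s (Cid y)); destruct s; apply cospan_iso_legs;
    [reflexivity | apply cmp_id_l].
Qed.

Lemma cospan_comp_assoc {x y z w : C} (s : cospan C x y) (t : cospan C y z) (u : cospan C z w) :
  cospan_iso (cospan_comp po (cospan_comp po s t) u) (cospan_comp po s (cospan_comp po t u)).
Proof.
  pose proof (po_spec C po _ _ _ (csp_r s) (csp_l t)) as P.
  pose proof (po_spec C po _ _ _ (csp_r t) (csp_l u)) as P'.
  set (q1 := po_q1 po (csp_r s) (csp_l t)) in *.
  set (q2 := po_q2 po (csp_r s) (csp_l t)) in *.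
  set (q1' := po_q1 po (csp_r t) (csp_l u)) in *.
  set (q2' := po_q2 po (csp_r t) (csp_l u)) in *.
  pose proof (po_spec C po _ _ _ q2 q1') as R.
  set (p1 := po_q1 po q2 q1') in *; set (p2 := po_q2 po q2 q1') in *.
  (* both composites are isomorphic to the joint pushout of [q2] and [q1'] *)
  transitivity {| csp_apex := po_ob po q2 q1'; csp_l := csp_l s >> (q1 >> p1);
                  csp_r := csp_r u >> (q2' >> p2) |}.
  - assert (FA : IsPushout (csp_r t >> q2) (csp_l u) p1 (q2' >> p2)).
    { apply (pushout_paste _ _ q1' q2' q2 p2 p1 P'), pushout_sym, R. }
    destruct (pushout_unique _ _ _ _ _ _ (po_spec C po _ _ _ (csp_r (cospan_comp po s t))
                (csp_l u)) FA) as [i [Hi [I1 I2]]].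
    exists i; split; [exact Hi|]; simpl in I1, I2 |- *; fold q1 q2 in I1, I2 |- *.
    split; rewrite !cmp_assoc; [rewrite I1 | rewrite I2]; reflexivity.
  - symmetry.
    assert (FB : IsPushout (csp_r s) (csp_l t >> q1') (q1 >> p1) p2).
    { apply pushout_sym, (pushout_paste _ _ q2 q1 q1' p1 p2 (pushout_sym _ _ _ _ P)), R. }
    destruct (pushout_unique _ _ _ _ _ _ (po_spec C po _ _ _ (csp_r s)
                (csp_l (cospan_comp po t u))) FB) as [i [Hi [I1 I2]]].
    exists i; split; [exact Hi|]; simpl in I1, I2 |- *; fold q1' q2' in I1, I2 |- *.
    split; rewrite !cmp_assoc; [rewrite I1 | rewrite I2]; reflexivity.
Qed.

Lemma Cospan_cat : IsCategory (CospanCat po).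
Proof.
  split; [|split; [|split; [|split]]]; simpl; intros.
  - apply Equivalence_equiv, cospan_iso_Equivalence.
  - apply cospan_comp_Proper; auto.
  - apply cospan_comp_id_l.
  - apply cospan_comp_id_r.
  - apply cospan_comp_assoc.
Qed.

End Cospans.

Definition corel_eq {C : Cat} (M : MorPred C) {x y : C} : relation (cospan C x y) :=
  clos_refl_sym_trans (cospan C x y) (corel_step M).

#[global] Instance corel_eq_Equivalence {C : Cat} (M : MorPred C) (x y : C) :
  Equivalence (@corel_eq C M x y).
Proof. apply rst_Equivalence. Qed.

Section Corelations.
Context {C : Cat} {hC : IsCategory C} (po : HasPushouts C) (M : MorPred C)
  (hMiso : ContainsIsos M) (hcost : Costable M).

Lemma corel_eq_of_iso {x y : C} (s t : cospan C x y) : cospan_iso s t -> corel_eq M s t.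
Proof. intros [i [Hi H]]; apply rst_step; exists i; split; [apply hMiso|]; auto. Qed.

#[global] Instance cospan_comp_corel_Proper (x y z : C) :
  Proper (corel_eq M ==> corel_eq M ==> corel_eq M) (@cospan_comp C po x y z).
Proof.
  intros s s' Hs t t' Ht; transitivity (cospan_comp po s' t).
  - apply (rst_ind_map (corel_step M) (corel_eq M) (fun s => cospan_comp po s t)); [|exact Hs].
    intros s1 s2 [m [Hm [H1 H2]]]; apply rst_step.
    destruct (cospan_comp_map_l po s1 s2 t m H1 H2) as [n [Pn N]].
    exists n; split; [exact (proj2 (hcost _ _ _ _ _ _ _ _ Pn) Hm) | exact N].
  - apply (rst_ind_map (corel_step M) (corel_eq M) (cospan_comp po s')); [|exact Ht].
    intros t1 t2 [m [Hm [H1 H2]]]; apply rst_step.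
    destruct (cospan_comp_map_r po s' t1 t2 m H1 H2) as [n [Pn N]].
    exists n; split; [exact (proj2 (hcost _ _ _ _ _ _ _ _ Pn) Hm) | exact N].
Qed.

Lemma Corel_cat : IsCategory (CorelCat po M).
Proof.
  split; [|split; [|split; [|split]]]; simpl; intros.
  - apply Equivalence_equiv, corel_eq_Equivalence.
  - apply cospan_comp_corel_Proper; auto.
  - apply corel_eq_of_iso, cospan_comp_id_l.
  - apply corel_eq_of_iso, cospan_comp_id_r.
  - apply corel_eq_of_iso, cospan_comp_assoc.
Qed.

End Corelations.

(** * Spans *)

Definition Cop (C : Cat) : Cat :=
  {| Ob := Ob C; Hm := fun a b => @Hm C b a;
     Heq := fun a b f g => @Heq C b a f g;
     Cid := fun a => @Cid C a;
     Cmp := fun a b c f g => @Cmp C c b a g f |}.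

#[global] Instance Cop_cat {C : Cat} {hC : IsCategory C} : IsCategory (Cop C).
Proof.
  split; [|split; [|split; [|split]]]; simpl.
  - intros a b; apply Equivalence_equiv, Heq_Equivalence.
  - intros a b c f f' g g' Hf Hg; simpl in *; rewrite Hf, Hg; reflexivity.
  - intros; apply cmp_id_r.
  - intros; apply cmp_id_l.
  - intros; symmetry; apply cmp_assoc.
Qed.

Definition op_pushouts {C : Cat} (pb : HasPullbacks C) : HasPushouts (Cop C) :=
  {| po_ob := fun (a b c : Cop C) f g => @pb_ob C pb b c a f g;
     po_q1 := fun (a b c : Cop C) f g => @pb_p1 C pb b c a f g;
     po_q2 := fun (a b c : Cop C) f g => @pb_p2 C pb b c a f g;
     po_spec := fun (a b c : Cop C) f g => pb_spec C pb b c a f g |}.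

Lemma iso_op {C : Cat} {a b : C} (i : @Hm C a b) : IsIso i <-> @IsIso (Cop C) b a i.
Proof. split; intros [j [H1 H2]]; exists j; split; auto. Qed.

(* A span of [C] is literally a cospan of [Cop C], and [span_comp pb] is [cospan_comp]
   for the pushouts of [Cop C]; the theory of spans is obtained by duality. *)
Definition span_to_op {C : Cat} {x y : C} (s : span C x y) : cospan (Cop C) x y :=
  @Build_cospan (Cop C) x y (sp_apex s) (sp_l s) (sp_r s).

Definition fwd_span {C : Cat} {x y : C} (f : Hm x y) : span C x y :=
  {| sp_apex := x; sp_l := Cid x; sp_r := f |}.

Definition bwd_span {C : Cat} {x y : C} (g : Hm y x) : span C x y :=
  {| sp_apex := y; sp_l := g; sp_r := Cid y |}.

Section Spans.
Context {C : Cat} {hC : IsCategory C} (pb : HasPullbacks C).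

Lemma span_to_op_comp {x y z : C} (s : span C x y) (t : span C y z) :
  span_to_op (span_comp pb s t) = cospan_comp (op_pushouts pb) (span_to_op s) (span_to_op t).
Proof. reflexivity. Qed.

Lemma span_iso_op {x y : C} (s t : span C x y) :
  span_iso s t <-> cospan_iso (span_to_op t) (span_to_op s).
Proof.
  split; intros [i [Hi H]]; exists i; split; auto; apply iso_op; exact Hi.
Qed.

#[global] Instance span_iso_Equivalence (x y : C) : Equivalence (@span_iso C x y).
Proof.
  split.
  - intro s; apply span_iso_op; reflexivity.
  - intros s t H; apply span_iso_op; symmetry; apply span_iso_op; exact H.
  - intros s t u H1 H2; apply span_iso_op in H1, H2; apply span_iso_op.
    etransitivity; eassumption.
Qed.

#[global] Instance span_comp_Proper (x y z : C) :
  Proper (span_iso ==> span_iso ==> span_iso) (@span_comp C pb x y z).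
Proof.
  intros s s' Hs t t' Ht; apply span_iso_op; rewrite !span_to_op_comp.
  apply (cospan_comp_Proper (op_pushouts pb)); apply span_iso_op; assumption.
Qed.

Lemma span_comp_id_l {x y : C} (s : span C x y) : span_iso (span_comp pb (span_id x) s) s.
Proof.
  apply span_iso_op; rewrite !span_to_op_comp; symmetry; apply (cospan_comp_id_l (op_pushouts pb)).
Qed.

Lemma span_comp_id_r {x y : C} (s : span C x y) : span_iso (span_comp pb s (span_id y)) s.
Proof.
  apply span_iso_op; rewrite !span_to_op_comp; symmetry; apply (cospan_comp_id_r (op_pushouts pb)).
Qed.

Lemma span_comp_assoc {x y z w : C} (s : span C x y) (t : span C y z) (u : span C z w) :
  span_iso (span_comp pb (span_comp pb s t) u) (span_comp pb s (span_comp pb t u)).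
Proof.
  apply span_iso_op; rewrite !span_to_op_comp; symmetry; apply (cospan_comp_assoc (op_pushouts pb)).
Qed.

Lemma span_comp_bwd {x y z : C} (g : Hm y x) (t : span C y z) :
  span_iso (span_comp pb (bwd_span g) t)
           {| sp_apex := sp_apex t; sp_l := sp_l t >> g; sp_r := sp_r t |}.
Proof.
  apply span_iso_op; rewrite span_to_op_comp; symmetry.
  apply (cospan_comp_fwd (op_pushouts pb) (x := x) (y := y) g (span_to_op t)).
Qed.

Lemma span_comp_fwd {x y z : C} (s : span C x y) (g : Hm y z) :
  span_iso (span_comp pb s (fwd_span g))
           {| sp_apex := sp_apex s; sp_l := sp_l s; sp_r := sp_r s >> g |}.
Proof.
  apply span_iso_op; rewrite span_to_op_comp; symmetry.
  apply (cospan_comp_bwd (op_pushouts pb) (x := x) (y := y) (z := z) (span_to_op s) g).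
Qed.

Lemma span_iso_legs {x y N : C} (f f' : Hm N x) (g g' : Hm N y) : f =~ f' -> g =~ g' ->
  span_iso {| sp_apex := N; sp_l := f; sp_r := g |}
           {| sp_apex := N; sp_l := f'; sp_r := g' |}.
Proof. intros; apply span_iso_op; apply (cospan_iso_legs (C := Cop C)); symmetry; auto. Qed.

Lemma span_iso_bwd_fwd {x y : C} (s : span C x y) :
  span_iso (span_comp pb (bwd_span (sp_l s)) (fwd_span (sp_r s))) s.
Proof.
  rewrite span_comp_bwd; destruct s; apply span_iso_legs; [apply cmp_id_l | reflexivity].
Qed.

Lemma SpanA_cat (A : MorPred C) (hA : IsSubcat A) (hst : PullbackStable A) :
  IsCategory (SpanACat pb A hA hst).
Proof.
  split; [|split; [|split; [|split]]]; simpl; intros.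
  - split; [|split]; intro; [reflexivity | etransitivity | symmetry]; eauto.
  - apply span_comp_Proper; auto.
  - apply span_comp_id_l.
  - apply span_comp_id_r.
  - apply span_comp_assoc.
Qed.

End Spans.

(** * Zigzags *)

Definition zz_eq {C : Cat} (A : MorPred C) {x y : C} : relation (zz A x y) :=
  clos_refl_sym_trans (zz A x y) (zz_red A x y).

#[global] Instance zz_eq_Equivalence {C : Cat} (A : MorPred C) (x y : C) :
  Equivalence (@zz_eq C A x y).
Proof. apply rst_Equivalence. Qed.

Section Zigzags.
Context {C : Cat} (A : MorPred C).

Lemma zz_app_nil_r {x y : C} (w : zz A x y) : zz_app w (zz_nil y) = w.
Proof. induction w; simpl; f_equal; auto. Qed.

Lemma zz_app_assoc {x y z t : C} (w : zz A x y) (v : zz A y z) (u : zz A z t) :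
  zz_app (zz_app w v) u = zz_app w (zz_app v u).
Proof. induction w; simpl; f_equal; auto. Qed.

Lemma zz_red_app_r {x y z : C} (w w' : zz A x y) (v : zz A y z) :
  zz_red A x y w w' -> zz_red A x z (zz_app w v) (zz_app w' v).
Proof. induction 1; simpl; constructor; auto. Qed.

#[global] Instance zz_app_Proper (x y z : C) :
  Proper (zz_eq A ==> zz_eq A ==> zz_eq A) (@zz_app C A x y z).
Proof.
  intros w w' Hw v v' Hv; transitivity (zz_app w' v).
  - apply (rst_ind_map (zz_red A x y) (zz_eq A) (fun w => zz_app w v)); [|exact Hw].
    intros; apply rst_step, zz_red_app_r; assumption.
  - clear Hw w; induction w' as [|? ? ? f hf w' IH|? ? ? g hg w' IH]; simpl; [exact Hv| |].
    + apply (rst_ind_map (zz_red A _ _) (zz_eq A) (zz_fwd f hf)); [|exact (IH _ _ Hv)].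
      intros; apply rst_step, zr_fctx; assumption.
    + apply (rst_ind_map (zz_red A _ _) (zz_eq A) (zz_bwd g hg)); [|exact (IH _ _ Hv)].
      intros; apply rst_step, zr_bctx; assumption.
Qed.

Lemma ZZ_cat : IsCategory (ZZCat A).
Proof.
  split; [|split; [|split; [|split]]]; simpl; intros.
  - apply Equivalence_equiv, zz_eq_Equivalence.
  - apply zz_app_Proper; auto.
  - reflexivity.
  - rewrite zz_app_nil_r; reflexivity.
  - rewrite zz_app_assoc; reflexivity.
Qed.

End Zigzags.

Section ZigzagToCospan.
Context {C : Cat} {hC : IsCategory C} (po : HasPushouts C) (A : MorPred C).

Lemma zz_to_cospan_fwd {x y z : C} (f : Hm x y) (hf : A x y f) (w : zz A y z) :
  zz_to_cospan po A (zz_fwd f hf w) = cospan_comp po (fwd_cospan f) (zz_to_cospan po A w).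
Proof. reflexivity. Qed.

Lemma zz_to_cospan_bwd {x y z : C} (g : Hm y x) (hg : A y x g) (w : zz A y z) :
  zz_to_cospan po A (zz_bwd g hg w) = cospan_comp po (bwd_cospan g) (zz_to_cospan po A w).
Proof. reflexivity. Qed.

Lemma zz_to_cospan_red {x y : C} (w w' : zz A x y) :
  zz_red A x y w w' -> cospan_iso (zz_to_cospan po A w) (zz_to_cospan po A w').
Proof.
  induction 1; rewrite ?zz_to_cospan_fwd, ?zz_to_cospan_bwd.
  - rewrite <- cospan_comp_assoc, cospan_comp_fwd; reflexivity.
  - rewrite <- cospan_comp_assoc, cospan_comp_bwd; reflexivity.
  - apply cospan_comp_id_l.
  - apply cospan_comp_id_l.
  - apply cospan_comp_Proper; [apply cospan_iso_legs|]; easy.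
  - apply cospan_comp_Proper; [apply cospan_iso_legs|]; easy.
  - apply cospan_comp_Proper; easy.
  - apply cospan_comp_Proper; easy.
Qed.

Lemma zz_to_cospan_app {x y z : C} (w : zz A x y) (v : zz A y z) :
  cospan_iso (zz_to_cospan po A (zz_app w v))
             (cospan_comp po (zz_to_cospan po A w) (zz_to_cospan po A v)).
Proof.
  induction w as [x|? ? ? f hf w IH|? ? ? g hg w IH]; simpl zz_app.
  - symmetry; apply cospan_comp_id_l.
  - rewrite !zz_to_cospan_fwd, IH, cospan_comp_assoc; reflexivity.
  - rewrite !zz_to_cospan_bwd, IH, cospan_comp_assoc; reflexivity.
Qed.

Lemma ZZtoCospan_functor : IsFunctor (ZZtoCospan po A).
Proof.
  split; [|split]; simpl; intros.
  - apply (rst_ind_map (zz_red A a b) cospan_iso (zz_to_cospan po A)); auto.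
    apply zz_to_cospan_red.
  - reflexivity.
  - apply zz_to_cospan_app.
Qed.

End ZigzagToCospan.

Definition zz_span {C : Cat} (pb : HasPullbacks C) (A : MorPred C) (hA : IsSubcat A)
  (hst : PullbackStable A) {x y : C} (w : zz A x y) : span C x y :=
  proj1_sig (zz_to_span pb A hA hst w).

Section ZigzagToSpan.
Context {C : Cat} {hC : IsCategory C} (pb : HasPullbacks C) (A : MorPred C)
  (hA : IsSubcat A) (hst : PullbackStable A).

Lemma zz_span_fwd {x y z : C} (f : Hm x y) (hf : A x y f) (w : zz A y z) :
  zz_span pb A hA hst (zz_fwd f hf w) = span_comp pb (fwd_span f) (zz_span pb A hA hst w).
Proof. reflexivity. Qed.

Lemma zz_span_bwd {x y z : C} (g : Hm y x) (hg : A y x g) (w : zz A y z) :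
  zz_span pb A hA hst (zz_bwd g hg w) = span_comp pb (bwd_span g) (zz_span pb A hA hst w).
Proof. reflexivity. Qed.

Lemma zz_span_A {x y : C} (w : zz A x y) :
  A _ _ (sp_l (zz_span pb A hA hst w)) /\ A _ _ (sp_r (zz_span pb A hA hst w)).
Proof. exact (proj2_sig (zz_to_span pb A hA hst w)). Qed.

Lemma zz_span_red {x y : C} (w w' : zz A x y) :
  zz_red A x y w w' -> span_iso (zz_span pb A hA hst w) (zz_span pb A hA hst w').
Proof.
  induction 1; rewrite ?zz_span_fwd, ?zz_span_bwd.
  - rewrite <- span_comp_assoc, span_comp_fwd; reflexivity.
  - rewrite <- span_comp_assoc, span_comp_bwd; reflexivity.
  - apply span_comp_id_l.
  - apply span_comp_id_l.
  - apply span_comp_Proper; [apply span_iso_legs|]; easy.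
  - apply span_comp_Proper; [apply span_iso_legs|]; easy.
  - apply span_comp_Proper; easy.
  - apply span_comp_Proper; easy.
Qed.

Lemma zz_span_app {x y z : C} (w : zz A x y) (v : zz A y z) :
  span_iso (zz_span pb A hA hst (zz_app w v))
           (span_comp pb (zz_span pb A hA hst w) (zz_span pb A hA hst v)).
Proof.
  induction w as [x|? ? ? f hf w IH|? ? ? g hg w IH]; simpl zz_app.
  - symmetry; apply span_comp_id_l.
  - rewrite !zz_span_fwd, IH, span_comp_assoc; reflexivity.
  - rewrite !zz_span_bwd, IH, span_comp_assoc; reflexivity.
Qed.

Lemma ZZtoSpan_functor : IsFunctor (ZZtoSpan pb A hA hst).
Proof.
  split; [|split]; simpl; intros.
  - apply (rst_ind_map (zz_red A a b) span_iso (zz_span pb A hA hst)); auto.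
    apply zz_span_red.
  - reflexivity.
  - apply zz_span_app.
Qed.

End ZigzagToSpan.

Lemma Gamma_functor {C : Cat} {hC : IsCategory C} (po : HasPushouts C) (M : MorPred C)
  (hMiso : ContainsIsos M) : IsFunctor (GammaF po M).
Proof.
  split; [|split]; simpl; intros; [apply corel_eq_of_iso; auto | reflexivity..].
Qed.

(** * The functor Pi *)

Lemma cmp_rewrite_l {C : Cat} {hC : IsCategory C} {b c d : C}
  (f : Hm b c) (g : Hm c d) (h : Hm b d) :
  f >> g =~ h -> forall w (x : Hm w b), (x >> f) >> g =~ x >> h.
Proof. intros H w x; rewrite cmp_assoc, H; reflexivity. Qed.

(* Rewrite with an equation [f >> g =~ h] in a left-associated composite. *)
Ltac rw_chain H :=
  rewrite <- ?cmp_assoc; first [rewrite (cmp_rewrite_l _ _ _ H) | rewrite H];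
  rewrite <- ?cmp_assoc.
Ltac rw_chain_sym H :=
  let H' := fresh in pose proof H as H'; symmetry in H'; rw_chain H'; clear H'.

Definition span_pushout {C : Cat} (po : HasPushouts C) {x y : C} (s : span C x y) :
  cospan C x y :=
  {| csp_apex := po_ob po (sp_l s) (sp_r s);
     csp_l := po_q1 po (sp_l s) (sp_r s);
     csp_r := po_q2 po (sp_l s) (sp_r s) |}.

(* For spans [x <-a- S -b-> y] and [y <-c- T -d-> z], let [G] be the pushout of the
   pullback of [b, c] and [mu : G -> y] the comparison map.  The map [n] from the pushout
   [K] of the composite span to the composite [W] of the two pushout cospans is a pushout of
   [mu] along [phi : G -> K]; so by costability [n] is in [M] whenever [mu] is. *)
Section CompositeSpanPushout.
Context {C : Cat} {hC : IsCategory C} (pb : HasPullbacks C) (po : HasPushouts C).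
Context {x y z S T : C} (a : Hm S x) (b : Hm S y) (c : Hm T y) (d : Hm T z).

Local Notation p1 := (pb_p1 pb b c).
Local Notation p2 := (pb_p2 pb b c).
Local Notation g1 := (po_q1 po p1 p2).
Local Notation g2 := (po_q2 po p1 p2).
Local Notation k1 := (po_q1 po (p1 >> a) (p2 >> d)).
Local Notation k2 := (po_q2 po (p1 >> a) (p2 >> d)).
Local Notation u1 := (po_q1 po a b).
Local Notation u2 := (po_q2 po a b).
Local Notation v1 := (po_q1 po c d).
Local Notation v2 := (po_q2 po c d).
Local Notation w1 := (po_q1 po u2 v1).
Local Notation w2 := (po_q2 po u2 v1).

Context (mu : Hm _ y) (M1 : g1 >> mu =~ b) (M2 : g2 >> mu =~ c).
Context (phi : Hm _ _) (F1 : g1 >> phi =~ a >> k1) (F2 : g2 >> phi =~ d >> k2).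
Context (n : Hm _ _) (N1 : k1 >> n =~ u1 >> w1) (N2 : k2 >> n =~ v2 >> w2).

Lemma composite_square_commutes : phi >> n =~ mu >> (u2 >> w1).
Proof.
  pose proof (proj1 (po_spec C po _ _ _ a b)) as Hu.
  pose proof (proj1 (po_spec C po _ _ _ c d)) as Hv.
  pose proof (proj1 (po_spec C po _ _ _ u2 v1)) as Hw.
  apply (pushout_jointly_epi _ _ _ _ (po_spec C po _ _ _ p1 p2)).
  - rw_chain F1; rw_chain N1; rw_chain Hu; rw_chain M1; reflexivity.
  - rw_chain F2; rw_chain N2; rw_chain_sym Hv; rw_chain_sym Hw; rw_chain M2; reflexivity.
Qed.

Lemma composite_square_pushout : IsPushout phi mu n (u2 >> w1).
Proof.
  pose proof (po_spec C po _ _ _ a b) as [_ UU].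
  pose proof (po_spec C po _ _ _ c d) as [_ UV].
  pose proof (po_spec C po _ _ _ u2 v1) as [Hw UW].
  split; [exact composite_square_commutes|].
  intros Q f h Hfh.
  destruct (UU _ (k1 >> f) h) as [al [[A1 A2] Au]].
  { rw_chain_sym F1; rw_chain Hfh; rw_chain M1; reflexivity. }
  destruct (UV _ h (k2 >> f)) as [be [[B1 B2] Bu]].
  { transitivity ((g2 >> mu) >> h); [apply Cmp_Proper; [symmetry; exact M2 | reflexivity]|].
    rw_chain_sym Hfh; rw_chain F2; reflexivity. }
  destruct (UW _ al be) as [t [[T1 T2] Tu]]; [rewrite A2, B1; reflexivity|].
  exists t; split; [split|].
  - apply (pushout_jointly_epi _ _ _ _ (po_spec C po _ _ _ _ _)).
    + rw_chain N1; rw_chain T1; rw_chain A1; reflexivity.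
    + rw_chain N2; rw_chain T2; rw_chain B2; reflexivity.
  - rw_chain T1; exact A2.
  - intros t' H1 H2; apply Tu; [apply Au | apply Bu].
    + rw_chain_sym N1; rw_chain H1; reflexivity.
    + rewrite <- cmp_assoc; exact H2.
    + rw_chain_sym Hw; exact H2.
    + rw_chain_sym N2; rw_chain H1; reflexivity.
Qed.

End CompositeSpanPushout.

Section SpanPushout.
Context {C : Cat} {hC : IsCategory C} (pb : HasPullbacks C) (po : HasPushouts C)
  (M A : MorPred C) (hMiso : ContainsIsos M) (hcost : Costable M)
  (hcond : PbPoCondition M A).

Lemma span_pushout_iso {x y : C} (s t : span C x y) :
  span_iso s t -> cospan_iso (span_pushout po s) (span_pushout po t).
Proof.
  intros [i [Hi [H1 H2]]].
  pose proof (pushout_precomp_iso i _ _ _ _ Hi (po_spec C po _ _ _ (sp_l t) (sp_r t))) as P.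
  apply (pushout_proper _ (sp_l s) _ (sp_r s) _ _ _ _ H1 H2 (reflexivity _) (reflexivity _))
    in P.
  exact (pushout_unique _ _ _ _ _ _ (po_spec C po _ _ _ (sp_l s) (sp_r s)) P).
Qed.

Lemma span_pushout_id (x : C) : cospan_iso (span_pushout po (span_id x)) (cospan_id x).
Proof. exact (pushout_unique _ _ _ _ _ _ (po_spec C po _ _ _ _ _) (pushout_id_l (Cid x))). Qed.

Lemma span_pushout_fwd {x y : C} (f : Hm x y) :
  cospan_iso (span_pushout po (fwd_span f)) (fwd_cospan f).
Proof. exact (pushout_unique _ _ _ _ _ _ (po_spec C po _ _ _ _ _) (pushout_id_l f)). Qed.

Lemma span_pushout_bwd {x y : C} (g : Hm y x) :
  cospan_iso (span_pushout po (bwd_span g)) (bwd_cospan g).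
Proof.
  exact (pushout_unique _ _ _ _ _ _ (po_spec C po _ _ _ _ _)
           (pushout_sym _ _ _ _ (pushout_id_l g))).
Qed.

Lemma span_pushout_bwd_fwd {x y : C} (s : span C x y) :
  cospan_iso (cospan_comp po (bwd_cospan (sp_l s)) (fwd_cospan (sp_r s))) (span_pushout po s).
Proof. apply cospan_iso_legs; apply cmp_id_l. Qed.

Lemma span_pushout_comp {x y z : C} (s : span C x y) (t : span C y z) :
  A _ _ (sp_r s) -> A _ _ (sp_l t) ->
  corel_step M (span_pushout po (span_comp pb s t))
    (cospan_comp po (span_pushout po s) (span_pushout po t)).
Proof.
  intros Hb Hc; destruct s as [S a b], t as [T c d]; simpl in *.
  pose proof (pb_spec C pb _ _ _ b c) as PB.
  set (p1 := pb_p1 pb b c) in *; set (p2 := pb_p2 pb b c) in *.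
  pose proof (po_spec C po _ _ _ p1 p2) as PG.
  pose proof (po_spec C po _ _ _ (p1 >> a) (p2 >> d)) as PK.
  pose proof (po_spec C po _ _ _ a b) as PU.
  pose proof (po_spec C po _ _ _ c d) as PV.
  pose proof (po_spec C po _ _ _ (po_q2 po a b) (po_q1 po c d)) as PW.
  destruct (pushout_map _ _ _ _ b c PG (proj1 PB)) as [mu [M1 M2]].
  pose proof (hcond _ _ _ b c Hb Hc _ _ _ PB _ _ _ PG mu M1 M2) as Mmu.
  destruct (pushout_map _ _ _ _ (a >> po_q1 po (p1 >> a) (p2 >> d))
              (d >> po_q2 po (p1 >> a) (p2 >> d)) PG) as [phi [F1 F2]].
  { rewrite <- !cmp_assoc; apply PK. }
  destruct (pushout_map _ _ _ _ (po_q1 po a b >> po_q1 po (po_q2 po a b) (po_q1 po c d))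
              (po_q2 po c d >> po_q2 po (po_q2 po a b) (po_q1 po c d)) PK) as [n [N1 N2]].
  { rw_chain (proj1 PU); rw_chain (proj1 PB); rw_chain (proj1 PW); rw_chain (proj1 PV); reflexivity. }
  exists n; split; [|simpl; split; auto].
  exact (proj2 (hcost _ _ _ _ _ _ _ _
                  (composite_square_pushout pb po a b c d mu M1 M2 phi F1 F2 n N1 N2)) Mmu).
Qed.

Lemma PiF_functor (hA : IsSubcat A) (hst : PullbackStable A) :
  IsFunctor (PiF pb po M A hA hst).
Proof.
  split; [|split]; simpl.
  - intros a b s t H; apply corel_eq_of_iso, span_pushout_iso; auto.
  - intros a; apply corel_eq_of_iso, span_pushout_id; auto.
  - intros a b c [s [Hsl Hsr]] [t [Htl Htr]]; apply rst_step, span_pushout_comp; auto.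
Qed.

Lemma span_pushout_zz (hA : IsSubcat A) (hst : PullbackStable A) {x y : C} (w : zz A x y) :
  corel_eq M (span_pushout po (zz_span pb A hA hst w)) (zz_to_cospan po A w).
Proof.
  induction w as [x|? ? ? f hf w IH|? ? ? g hg w IH].
  - apply corel_eq_of_iso, span_pushout_id; auto.
  - rewrite zz_span_fwd, zz_to_cospan_fwd.
    transitivity (cospan_comp po (span_pushout po (fwd_span f))
                    (span_pushout po (zz_span pb A hA hst w))).
    + apply rst_step, span_pushout_comp; [exact hf | apply zz_span_A].
    + apply cospan_comp_corel_Proper; [exact hcost | | exact IH].
      apply corel_eq_of_iso, span_pushout_fwd; exact hMiso.
  - rewrite zz_span_bwd, zz_to_cospan_bwd.
    transitivity (cospan_comp po (span_pushout po (bwd_span g))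
                    (span_pushout po (zz_span pb A hA hst w))).
    + apply rst_step, span_pushout_comp; [apply hA | apply zz_span_A].
    + apply cospan_comp_corel_Proper; [exact hcost | | exact IH].
      apply corel_eq_of_iso, span_pushout_bwd; exact hMiso.
Qed.

End SpanPushout.

(** * The universal property *)

Section Transport.
Context {D : Cat} {hD : IsCategory D}.

#[global] Instance hcast_Proper {a b a' b' : D} (ea : a = a') (eb : b = b') :
  Proper (Heq ==> Heq) (@hcast D a b a' b' ea eb).
Proof. destruct ea, eb; intros f g H; exact H. Qed.

Lemma hcast_sym {a b a' b' : D} (ea : a = a') (eb : b = b') (f : Hm a b) :
  hcast (eq_sym ea) (eq_sym eb) (hcast ea eb f) = f.
Proof. destruct ea, eb; reflexivity. Qed.

Lemma hcast_id {a a' : D} (ea : a = a') : hcast ea ea (Cid a) = Cid a'.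
Proof. destruct ea; reflexivity. Qed.

End Transport.

Definition diag_cospan {C : Cat} {x y : C} (m : Hm x y) : cospan C x x :=
  {| csp_apex := y; csp_l := m; csp_r := m |}.

Section CospanFactorisation.
Context {C : Cat} {hC : IsCategory C} (po : HasPushouts C).

Lemma cospan_iso_fwd_bwd {x y : C} (s : cospan C x y) :
  cospan_iso (cospan_comp po (fwd_cospan (csp_l s)) (bwd_cospan (csp_r s))) s.
Proof.
  rewrite cospan_comp_fwd; destruct s; apply cospan_iso_legs; [apply cmp_id_r | reflexivity].
Qed.

Lemma cospan_iso_fwd_diag_bwd {x y N N' : C} (f : Hm x N) (g : Hm y N) (m : Hm N N') :
  cospan_iso (cospan_comp po (fwd_cospan f) (cospan_comp po (diag_cospan m) (bwd_cospan g)))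
             {| csp_apex := N'; csp_l := f >> m; csp_r := g >> m |}.
Proof. rewrite cospan_comp_bwd, cospan_comp_fwd; reflexivity. Qed.

End CospanFactorisation.

Lemma mono_pullback_self {C : Cat} {hC : IsCategory C} {N N' : C} (m : Hm N N') :
  IsMono m -> IsPullback m m (Cid N) (Cid N).
Proof.
  intros Hm; split; [reflexivity|].
  intros w u v H; exists u; split; [split|].
  - apply cmp_id_r.
  - rewrite cmp_id_r; apply Hm; exact H.
  - intros t' H1 _; rewrite cmp_id_r in H1; exact H1.
Qed.

Lemma span_comp_fwd_bwd_mono {C : Cat} {hC : IsCategory C} (pb : HasPullbacks C)
  {N N' : C} (m : Hm N N') :
  IsMono m -> span_iso (span_comp pb (fwd_span m) (bwd_span m)) (span_id N).
Proof.
  intros Hm.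
  destruct (pushout_unique (C := Cop C) _ _ _ _ _ _ (mono_pullback_self m Hm)
              (pb_spec C pb _ _ _ m m)) as [i [Hi [I1 I2]]].
  exists i; split; [apply iso_op; exact Hi|]; simpl in I1, I2 |- *.
  rewrite !cmp_id_r; rewrite cmp_id_r in I1, I2; split; assumption.
Qed.

Section Universal.
Context {C : Cat} {hC : IsCategory C} (pb : HasPullbacks C) (po : HasPushouts C)
  (M A : MorPred C) (hmono : AllMono M)
  (hA : IsSubcat A) (hMA : forall a b (f : Hm a b), M a b f -> A a b f)
  (hst : PullbackStable A).
Context {D : Cat} {hD : IsCategory D}
  (h : Functor (SpanACat pb A hA hst) D) (k : Functor (CospanCat po) D)
  (Fh : IsFunctor h) (Fk : IsFunctor k)
  (e : forall x, Fob h x = Fob k x)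
  (He : forall x y (w : zz A x y),
      hcast (e x) (e y) (Fhm h (zz_to_span pb A hA hst w)) =~ Fhm k (zz_to_cospan po A w)).

Lemma functor_diag_cospan_id {N N' : C} (m : Hm N N') :
  M _ _ m -> Fhm k (diag_cospan m) =~ Cid (Fob k N).
Proof.
  intros HM.
  set (w := zz_fwd m (hMA _ _ _ HM) (zz_bwd m (hMA _ _ _ HM) (zz_nil N))).
  assert (Hspan : span_iso (zz_span pb A hA hst w) (span_id N)).
  { unfold w; rewrite zz_span_fwd, zz_span_bwd, span_comp_id_r.
    apply span_comp_fwd_bwd_mono, hmono, HM. }
  assert (Hcospan : cospan_iso (zz_to_cospan po A w) (diag_cospan m)).
  { unfold w; rewrite zz_to_cospan_fwd, zz_to_cospan_bwd, cospan_comp_id_r.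
    apply (cospan_iso_fwd_bwd po (diag_cospan m)). }
  rewrite <- (proj1 Fk _ _ _ _ Hcospan), <- He, <- (hcast_id (e N)).
  apply hcast_Proper; rewrite <- (proj1 (proj2 Fh) N); apply Fh, Hspan.
Qed.

Lemma functor_cospan_comp {x y z : C} (s : cospan C x y) (t : cospan C y z) :
  Fhm k (cospan_comp po s t) =~ Fhm k s >> Fhm k t.
Proof. apply Fk. Qed.

Lemma functor_corel_step {x y : C} (s t : cospan C x y) :
  corel_step M s t -> Fhm k s =~ Fhm k t.
Proof.
  intros [m [HM [H1 H2]]].
  rewrite <- (proj1 Fk _ _ _ _ (cospan_iso_fwd_bwd po s)).
  transitivity (Fhm k (cospan_comp po (fwd_cospan (csp_l s))
                         (cospan_comp po (diag_cospan m) (bwd_cospan (csp_r s))))).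
  - rewrite !functor_cospan_comp, functor_diag_cospan_id, cmp_id_l by exact HM; reflexivity.
  - apply Fk; rewrite cospan_iso_fwd_diag_bwd; destruct t; apply cospan_iso_legs; auto.
Qed.

Definition corel_lift : Functor (CorelCat po M) D :=
  @Build_Functor (CorelCat po M) D (Fob k) (fun x y (s : cospan C x y) => Fhm k s).

Lemma corel_lift_functor : IsFunctor corel_lift.
Proof.
  split; [|split]; simpl; intros; [|apply Fk..].
  apply (rst_ind_map (corel_step M) Heq (Fhm k)); auto; apply functor_corel_step.
Qed.

Definition span_zz {x y : C} (s : spanA A x y) : zz A x y :=
  zz_bwd (sp_l (proj1_sig s)) (proj1 (proj2_sig s))
    (zz_fwd (sp_r (proj1_sig s)) (proj2 (proj2_sig s)) (zz_nil y)).

Lemma corel_lift_Pi : FunEq (Fcomp (PiF pb po M A hA hst) corel_lift) h.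
Proof.
  exists (fun x => eq_sym (e x)); intros x y s; simpl.
  assert (Hspan : span_iso (zz_span pb A hA hst (span_zz s)) (proj1_sig s)).
  { unfold span_zz; rewrite zz_span_bwd, zz_span_fwd, span_comp_id_r.
    apply span_iso_bwd_fwd. }
  assert (Hcospan : cospan_iso (zz_to_cospan po A (span_zz s)) (span_pushout po (proj1_sig s))).
  { unfold span_zz; rewrite zz_to_cospan_bwd, zz_to_cospan_fwd, cospan_comp_id_r.
    apply span_pushout_bwd_fwd. }
  rewrite <- (proj1 Fk _ _ _ _ Hcospan), <- He, hcast_sym.
  apply Fh, Hspan.
Qed.

Lemma corel_lift_unique (u : Functor (CorelCat po M) D) :
  FunEq (Fcomp (GammaF po M) u) k -> FunEq u corel_lift.
Proof. intros [e' He']; exists e'; exact He'. Qed.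

End Universal.

Lemma Pi_Gamma_pushout {C : Cat} {hC : IsCategory C} (pb : HasPullbacks C)
  (po : HasPushouts C) (M A : MorPred C) (hMiso : ContainsIsos M) (hcost : Costable M)
  (hmono : AllMono M) (hA : IsSubcat A) (hMA : forall a b (f : Hm a b), M a b f -> A a b f)
  (hst : PullbackStable A) (hcond : PbPoCondition M A) :
  IsPushoutCAT (ZZtoSpan pb A hA hst) (ZZtoCospan po A) (PiF pb po M A hA hst) (GammaF po M).
Proof.
  split.
  - exists (fun x => eq_refl); intros x y w; apply span_pushout_zz; assumption.
  - intros D hD h k Fh Fk [e He].
    exists (corel_lift po M k); split; [|split; [|split]].
    + eapply corel_lift_functor with (e := e); eassumption.
    + apply corel_lift_Pi with (e := e); assumption.
    + exists (fun x => eq_refl); intros; reflexivity.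
    + intros u _ _; apply corel_lift_unique.
Qed.

Theorem theorem3p2 (C : Cat) (pb : HasPullbacks C) (po : HasPushouts C)
  (E M A : MorPred C)
  (hC : IsCategory C)
  (hEM : FactSystem E M) (hcost : Costable M) (hmono : AllMono M)
  (hA : IsSubcat A) (hMA : forall a b (f : Hm a b), M a b f -> A a b f)
  (hst : PullbackStable A) (hcond : PbPoCondition M A) :
  IsCategory (ZZCat A) /\ IsCategory (SpanACat pb A hA hst) /\
  IsCategory (CospanCat po) /\ IsCategory (CorelCat po M) /\
  IsFunctor (ZZtoSpan pb A hA hst) /\ IsFunctor (ZZtoCospan po A) /\
  IsFunctor (PiF pb po M A hA hst) /\ IsFunctor (GammaF po M) /\
  IsPushoutCAT (ZZtoSpan pb A hA hst) (ZZtoCospan po A)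
               (PiF pb po M A hA hst) (GammaF po M).
Proof.
  assert (hMiso : ContainsIsos M) by apply hEM.
  split; [apply ZZ_cat|].
  split; [apply SpanA_cat|].
  split; [apply Cospan_cat|].
  split; [apply Corel_cat; assumption|].
  split; [apply ZZtoSpan_functor|].
  split; [apply ZZtoCospan_functor|].
  split; [apply PiF_functor; assumption|].
  split; [apply Gamma_functor; assumption|].
  apply Pi_Gamma_pushout; assumption.
Qed.
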